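(* Let $T_0$ be a Steiner tree of the regular $d$-simplex, and let $\{T_k\}_{k\ge 0}$ be the sequence of Steiner trees of regular simplices obtained by repeatedly applying the doubling procedure to $T_0$ (so $T_k$ is a Steiner tree of the regular $2^kd$-simplex). Let $\ell_k$ denote the Steiner ratio of $T_k$, i.e. the cost of $T_k$ divided by the cost $(2^kd-1)\sqrt2$ of a minimum spanning tree of its terminals. If $\lim_{k\to\infty}\ell_k$ exists, then \[\lim_{k\to\infty}\ell_k=\frac{\sqrt3}{\sqrt2\,(2\sqrt2-1)}.\]
   Context: The regular $n$-simplex refers to the terminal set of standard basis vectors $\mathbf{e_1},\dots,\mathbf{e_n}\in\mathbb{R}^n$ (pairwise distance $\sqrt2$). A Steiner tree of a finite terminal set $P$ is a tree with vertex set $P\cup S$, $S$ a finite set of Steiner points, with Euclidean edge lengths; its cost is its total length. For $\mathbf{x}\in\mathbb{R}^m$, the split of $\mathbf{x}$ is $\left(\frac{x_1}{2},\frac{x_1}{2},\dots,\frac{x_m}{2},\frac{x_m}{2}\right)\in\mathbb{R}^{2m}$. The Fermat point of a triangle with all angles less than $120^\circ$ is the interior point at which each pair of vertices subtends $120^\circ$. Doubling procedure: given a Steiner tree $T$ of the regular $m$-simplex with Steiner point set $S$ in which each terminal is a leaf adjacent to a Steiner point, form $T'$ on terminals $\mathbf{e_1},\dots,\mathbf{e_{2m}}\in\mathbb{R}^{2m}$ by (1) taking the split $\mathbf{s'}$ of each $\mathbf{s}\in S$ as a Steiner point; (2) joining $\mathbf{r'},\mathbf{s'}$ whenever $\mathbf{r},\mathbf{s}\in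 S$ are adjacent in $T$; (3) for each terminal $\mathbf{e_i}$ of $T$ with adjacent Steiner point $\mathbf{s_i}$, adding the Fermat point $\mathbf{x_i}$ of the triangle $\mathbf{e_{2i-1}}\mathbf{e_{2i}}\mathbf{s'_i}$ as a Steiner point; (4) adding edges $(\mathbf{e_{2i-1}},\mathbf{x_i}),(\mathbf{e_{2i}},\mathbf{x_i}),(\mathbf{x_i},\mathbf{s'_i})$. It is implicitly assumed that $T_0$ is such that the procedure can be applied repeatedly (all required Fermat points exist). *)

From HB Require Import structures.
From mathcomp Require Import all_boot all_order all_algebra.
From mathcomp Require Import all_classical all_reals all_analysis.
Set Implicit Arguments. Unset Strict Implicit. Unset Printing Implicit Defensive.
Import Order.TTheory GRing.Theory Num.Theory.
Local Open Scope ring_scope.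

Section Steiner.
Variable R : realType.

Definition dotv n (u v : 'rV[R]_n) : R := \sum_(i < n) u 0 i * v 0 i.
Definition elen n (u : 'rV[R]_n) : R := Num.sqrt (dotv u u).

(* standard basis vector e_i of R^n (0-indexed: i : 'I_n) *)
Definition ebas n (i : 'I_n) : 'rV[R]_n := \row_(j < n) (i == j)%:R.

(* A tree on a finite vertex type: symmetric irreflexive edge relation,
   connected, with |V|-1 (unordered) edges (= 2(|V|-1) ordered pairs). *)
Definition is_tree (V : finType) (E : rel V) : Prop :=
  symmetric E /\ irreflexive E /\ (forall u v, connect E u v) /\
  #|[set p : V * V | E p.1 p.2]| = (2 * (#|V| - 1))%N.

(* A (candidate) Steiner tree of the regular nT-simplex: terminals are
   indexed by 'I_nT (terminal i sits at e_i), Steiner points by the finite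
   type St, with positions spos; E is the edge relation on P u S. *)
Record stree := STree {
  nT : nat;
  St : finType;
  spos : St -> 'rV[R]_nT;
  E : rel ('I_nT + St)%type }.
Arguments E : clear implicits.
Arguments spos : clear implicits.

Definition vpos (T : stree) (v : ('I_(nT T) + St T)%type) : 'rV[R]_(nT T) :=
  match v with inl i => ebas i | inr s => spos T s end.

Definition is_steiner_tree (T : stree) : Prop := is_tree (E T).

(* total length (each unordered edge counted once) *)
Definition cost (T : stree) : R :=
  (\sum_(u : ('I_(nT T) + St T)%type) \sum_(v | E T u v)
      elen (vpos u - vpos v)) / 2.

(* The Fermat point x of triangle abc: x distinct from the vertices and each
   pair of vertices subtends 120 degrees at x (cos = -1/2). *)
Definition is_fermat n (a b c x : 'rV[R]_n) : Prop :=
  [/\ x != a, x != b & x != c] /\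
  [/\ dotv (a - x) (b - x) = - 2^-1 * (elen (a - x) * elen (b - x)),
       dotv (b - x) (c - x) = - 2^-1 * (elen (b - x) * elen (c - x)) &
       dotv (a - x) (c - x) = - 2^-1 * (elen (a - x) * elen (c - x))].

(* index helpers: j : 'I_(2n) |-> j/2 ; i |-> 2i, 2i+1 (0-indexed versions of
   e_{2i-1}, e_{2i} for terminal e_i). *)
Lemma half_ord_proof n (j : 'I_(n.*2)) : (j./2 < n)%N.
Proof. by rewrite ltn_half_double. Qed.
Definition half_ord n (j : 'I_(n.*2)) : 'I_n := Ordinal (half_ord_proof j).
Lemma dbl_ord_proof n (i : 'I_n) : (i.*2 < n.*2)%N.
Proof. by rewrite ltn_double. Qed.
Definition dbl_ord n (i : 'I_n) : 'I_(n.*2) := Ordinal (dbl_ord_proof i).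
Lemma dblS_ord_proof n (i : 'I_n) : (i.*2.+1 < n.*2)%N.
Proof. by rewrite ltn_Sdouble. Qed.
Definition dblS_ord n (i : 'I_n) : 'I_(n.*2) := Ordinal (dblS_ord_proof i).

Definition splitv n (x : 'rV[R]_n) : 'rV[R]_(n.*2) :=
  \row_(j < n.*2) (x 0 (half_ord j) / 2).

Definition leaf_att (T : stree) (att : 'I_(nT T) -> St T) : Prop :=
  forall i v, E T (inl i) v = (v == inr (att i)).

(* Doubling: new Steiner points are the splits of the old ones (inl) and
   the Fermat points x i (inr). *)
Definition dbl_edge (T : stree) (att : 'I_(nT T) -> St T)
  (u v : ('I_((nT T).*2) + (St T + 'I_(nT T))%type)%type) : bool :=
  match u, v with
  | inr (inl r), inr (inl s) => E T (inr r) (inr s)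
  | inl j, inr (inr i) => half_ord j == i
  | inr (inr i), inl j => half_ord j == i
  | inr (inr i), inr (inl s) => s == att i
  | inr (inl s), inr (inr i) => s == att i
  | _, _ => false
  end.

Definition dbl_spos (T : stree) (x : 'I_(nT T) -> 'rV[R]_((nT T).*2))
  (s : (St T + 'I_(nT T))%type) : 'rV[R]_((nT T).*2) :=
  match s with inl s0 => splitv (spos T s0) | inr i => x i end.

Definition doubling (T : stree) (att : 'I_(nT T) -> St T)
  (x : 'I_(nT T) -> 'rV[R]_((nT T).*2)) : stree :=
  @STree ((nT T).*2) (St T + 'I_(nT T))%type (dbl_spos x) (dbl_edge att).

Definition is_doubling (T T' : stree) : Prop :=
  exists (att : 'I_(nT T) -> St T) (x : 'I_(nT T) -> 'rV[R]_((nT T).*2)),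
    [/\ leaf_att att,
        (forall i, is_fermat (ebas (dbl_ord i)) (ebas (dblS_ord i))
                             (splitv (spos T (att i))) (x i)) &
        T' = doubling att x].

End Steiner.

Definition ratio_seq (R : realType) (d : nat) (T : nat -> stree R) : R^nat :=
  fun k => cost (T k) / (((2 ^ k * d)%N%:R - 1) * Num.sqrt 2).

From HB Require Import structures.
From mathcomp Require Import all_boot all_order all_algebra.
From mathcomp Require Import all_classical all_reals all_analysis.
From mathcomp Require Import ring lra.
Import Order.TTheory GRing.Theory Num.Theory.
Import numFieldNormedType.Exports.
Set Implicit Arguments. Unset Strict Implicit. Unset Printing Implicit Defensive.
Local Open Scope ring_scope.

(* Splitting scales all distances by 1/sqrt 2.  For a terminal e_i with
   neighbour s, the triangle e_(2i-1) e_(2i) s' is isosceles with base sqrt 2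
   and height |e_i - s|/sqrt 2, so its Fermat point has total distance
   (|e_i - s| + sqrt 3)/sqrt 2 to the vertices.  Hence
   cost T_(k+1) = (cost T_k + 2^k d sqrt 3)/sqrt 2, i.e. c_k = cost T_k / 2^k
   obeys the affine recursion c_(k+1) = (c_k + d sqrt 3)/(2 sqrt 2).  Since
   c_k ~ sqrt 2 d l_k, the limit of l_k is forced by the fixed point of this
   recursion. *)

Lemma isosceles_fermat_sum (R : rcfType) (p q r t : R) :
  0 <= p -> 0 <= q -> 0 <= r -> 0 <= t ->
  p ^+ 2 + q ^+ 2 + p * q = 2 ->
  q ^+ 2 + r ^+ 2 + q * r = (t ^+ 2 + 1) / 2 ->
  p ^+ 2 + r ^+ 2 + p * r = (t ^+ 2 + 1) / 2 ->
  Num.sqrt 2 * (p + q + r) = t + Num.sqrt 3.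
Proof.
move=> p0 q0 r0 t0 hpq hqr hpr.
have sqrK (x y : R) : 0 <= x -> 0 <= y -> x ^+ 2 = y ^+ 2 -> x = y.
  by move=> x0 y0; apply: (pexpIrn (isT : (0 < 2)%N)); rewrite nnegrE.
set s2 := Num.sqrt (2 : R); set s3 := Num.sqrt (3 : R).
have s2_gt0 : 0 < s2 by rewrite sqrtr_gt0.
have s3_gt0 : 0 < s3 by rewrite sqrtr_gt0.
have s2_sqr : s2 ^+ 2 = 2 by rewrite sqr_sqrtr.
have s3_sqr : s3 ^+ 2 = 3 by rewrite sqr_sqrtr.
have qp : q = p.
  have : (q - p) * (q + p + r) = (q ^+ 2 + r ^+ 2 + q * r) - (p ^+ 2 + r ^+ 2 + p * r)
    by ring.
  rewrite hqr hpr subrr.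
  by move/eqP; rewrite mulf_eq0 subr_eq0 => /orP[/eqP //|]; nra.
subst q.
have p_val : p = s2 * s3 / 3.
  apply: sqrK => //; first by apply: divr_ge0; [nra|lra].
  by rewrite expr_div_n exprMn s2_sqr s3_sqr; nra.
have r_val : 2 * r + p = s2 * t.
  by apply: sqrK; [nra|nra|rewrite exprMn s2_sqr; nra].
have -> : r = (s2 * t - p) / 2 by rewrite -r_val; field.
rewrite p_val.
have -> : s2 * (s2 * s3 / 3 + s2 * s3 / 3 + (s2 * t - s2 * s3 / 3) / 2)
  = s2 ^+ 2 * (s3 / 2 + t / 2) by field.
by rewrite s2_sqr; field.
Qed.

Lemma sqrt2_neq0 (R : rcfType) : Num.sqrt 2 != 0 :> R.
Proof. by rewrite sqrtr_eq0 -ltNge. Qed.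

Section Geometry.
Variable R : realType.
Implicit Types n : nat.

Lemma dotv_selfB n (u v : 'rV[R]_n) :
  dotv (u - v) (u - v) = dotv u u + dotv v v - 2 * dotv u v.
Proof.
rewrite /dotv mulr_sumr -big_split -sumrB /=.
by apply: eq_bigr => i _; rewrite !mxE; ring.
Qed.

Lemma dotv_self_ge0 n (u : 'rV[R]_n) : 0 <= dotv u u.
Proof. by apply: sumr_ge0 => i _; rewrite -expr2 sqr_ge0. Qed.

Lemma elen_sqr n (u : 'rV[R]_n) : elen u ^+ 2 = dotv u u.
Proof. by rewrite sqr_sqrtr // dotv_self_ge0. Qed.

Lemma elen_ge0 n (u : 'rV[R]_n) : 0 <= elen u.
Proof. exact: sqrtr_ge0. Qed.

Lemma elenBC n (u v : 'rV[R]_n) : elen (u - v) = elen (v - u).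
Proof.
rewrite -opprB /elen /dotv; congr Num.sqrt; apply: eq_bigr => i _.
by rewrite !mxE mulrNN.
Qed.

Lemma dotv_ebasl n (j : 'I_n) (w : 'rV[R]_n) : dotv (ebas R j) w = w 0 j.
Proof.
rewrite /dotv (bigD1 j) //= big1 => [|k /negbTE]; rewrite !mxE ?eqxx.
  by rewrite mul1r addr0.
by rewrite eq_sym => ->; rewrite mul0r.
Qed.

Lemma dotv_self_ebasB n (j : 'I_n) (w : 'rV[R]_n) :
  dotv (ebas R j - w) (ebas R j - w) = 1 - 2 * w 0 j + dotv w w.
Proof. by rewrite dotv_selfB !dotv_ebasl !mxE eqxx /=; ring. Qed.

Lemma law_of_cosines_120 n (u v w : 'rV[R]_n) :
  dotv (u - w) (v - w) = - 2^-1 * (elen (u - w) * elen (v - w)) ->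
  dotv (u - v) (u - v) =
    elen (u - w) ^+ 2 + elen (v - w) ^+ 2 + elen (u - w) * elen (v - w).
Proof.
move=> angle; have -> : u - v = (u - w) - (v - w) by rewrite opprB addrA subrK.
by rewrite dotv_selfB angle -!elen_sqr; field.
Qed.

Lemma half_dbl_ord n (i : 'I_n) : half_ord (dbl_ord i) = i.
Proof. by apply: val_inj => /=; rewrite doubleK. Qed.

Lemma half_dblS_ord n (i : 'I_n) : half_ord (dblS_ord i) = i.
Proof. by apply: val_inj => /=; rewrite uphalf_double. Qed.

Lemma dbl_ord_neq n (i : 'I_n) : (dbl_ord i == dblS_ord i) = false.
Proof. by apply/negbTE; rewrite -val_eqE /= neq_ltn ltnSn. Qed.

Lemma big_ord_double n (F : 'I_(n.*2) -> R) :
  \sum_(j < n.*2) F j = \sum_(i < n) (F (dbl_ord i) + F (dblS_ord i)).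
Proof.
pose G k := if insub k is Some j then F j else 0.
have FG (j : 'I_(n.*2)) : F j = G (val j) by rewrite /G valK.
rewrite (eq_bigr (G \o val)) => [|j _]; last exact: FG.
rewrite [RHS](eq_bigr (fun i : 'I_n => G (val i).*2 + G (val i).*2.+1));
  last by move=> i _; rewrite !FG.
rewrite -(big_mkord xpredT G) -(big_mkord xpredT (fun i => G i.*2 + G i.*2.+1)).
elim: n {F FG} G => [|n IH] G; first by rewrite !big_geq.
by rewrite doubleS !big_nat_recr //= IH addrA.
Qed.

Lemma splitvB n (u v : 'rV[R]_n) : splitv u - splitv v = splitv (u - v).
Proof. by apply/rowP => j; rewrite !mxE mulrBl. Qed.

Lemma splitv_dbl_ord n (w : 'rV[R]_n) i : splitv w 0 (dbl_ord i) = w 0 i / 2.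
Proof. by rewrite mxE half_dbl_ord. Qed.

Lemma splitv_dblS_ord n (w : 'rV[R]_n) i : splitv w 0 (dblS_ord i) = w 0 i / 2.
Proof. by rewrite mxE half_dblS_ord. Qed.

Lemma dotv_self_splitv n (w : 'rV[R]_n) :
  dotv (splitv w) (splitv w) = dotv w w / 2.
Proof.
rewrite /dotv big_ord_double mulr_suml; apply: eq_bigr => i _.
by rewrite splitv_dbl_ord splitv_dblS_ord; field.
Qed.

Lemma elen_splitvB n (u v : 'rV[R]_n) :
  elen (splitv u - splitv v) = elen (u - v) / Num.sqrt 2.
Proof.
by rewrite splitvB /elen dotv_self_splitv sqrtrM ?dotv_self_ge0 // sqrtrV.
Qed.

Lemma fermat_splitv_sum n (s : 'rV[R]_n) (i : 'I_n) (x : 'rV[R]_(n.*2)) :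
  is_fermat (ebas R (dbl_ord i)) (ebas R (dblS_ord i)) (splitv s) x ->
  Num.sqrt 2 * (elen (ebas R (dbl_ord i) - x) + elen (ebas R (dblS_ord i) - x)
                + elen (splitv s - x)) = elen (ebas R i - s) + Num.sqrt 3.
Proof.
move=> [_ [angle_ab angle_bc angle_ac]].
have leg_sqr (j : 'I_(n.*2)) : j = dbl_ord i \/ j = dblS_ord i ->
    dotv (ebas R j - splitv s) (ebas R j - splitv s) =
    (elen (ebas R i - s) ^+ 2 + 1) / 2.
  by case=> ->; rewrite elen_sqr !dotv_self_ebasB dotv_self_splitv
    ?splitv_dbl_ord ?splitv_dblS_ord; field.
apply: (@isosceles_fermat_sum R); rewrite ?elen_ge0 //.
- move: (law_of_cosines_120 angle_ab).
  rewrite dotv_selfB !dotv_ebasl !mxE !eqxx eq_sym dbl_ord_neq /=.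
  by move=> <-; ring.
- by rewrite -(law_of_cosines_120 angle_bc) leg_sqr //; right.
- by rewrite -(law_of_cosines_120 angle_ac) leg_sqr //; left.
Qed.

End Geometry.

Section Cost.
Variable R : realType.

Definition steiner_len (T : stree R) : R :=
  \sum_(s : St T) \sum_(r | @E _ T (inr s) (inr r)) elen (@spos _ T s - @spos _ T r).

Lemma cost_leaf_att (T : stree R) (att : 'I_(nT T) -> St T) :
  symmetric (@E _ T) -> leaf_att att ->
  cost T = \sum_i elen (ebas R i - @spos _ T (att i)) + steiner_len T / 2.
Proof.
move=> Esym leaf; rewrite /cost big_sumType /=.
under eq_bigr => i _ do rewrite (eq_bigl _ _ (leaf i)) big_pred1_eq /=.
under [X in _ + X]eq_bigr => s _ do rewrite big_sumType /=.
have to_leaves : \sum_s \sum_(i | @E _ T (inr s) (inl i)) elen (@spos _ T s - ebas R i)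
    = \sum_i elen (ebas R i - @spos _ T (att i)).
  rewrite (exchange_big_dep xpredT) //=; apply: eq_bigr => i _.
  rewrite (eq_bigl (pred1 (att i))) => [|s]; last by rewrite Esym leaf.
  by rewrite big_pred1_eq elenBC.
by rewrite big_split /= to_leaves -/(steiner_len T); field.
Qed.

Lemma cost_doubling (T : stree R) (att : 'I_(nT T) -> St T)
    (x : 'I_(nT T) -> 'rV[R]_((nT T).*2)) :
  cost (doubling att x) =
    \sum_i (elen (ebas R (dbl_ord i) - x i) + elen (ebas R (dblS_ord i) - x i)
            + elen (splitv (@spos _ T (att i)) - x i))
    + steiner_len T / (2 * Num.sqrt 2).
Proof.
rewrite /cost big_sumType big_sumType /=.
under eq_bigr => j _ do
  rewrite big_sumType big_sumType /= !big_pred0_eq ?add0r ?addr0.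
under [X in _ + (X + _)]eq_bigr => s _ do
  rewrite big_sumType big_sumType /= big_pred0_eq add0r.
under [X in _ + (_ + X)]eq_bigr => i _ do
  rewrite big_sumType big_sumType /= big_pred0_eq addr0.
have sum_half (F : 'I_(nT T) -> R) j : \sum_(i | half_ord j == i) F i = F (half_ord j).
  by apply: big_pred1 => i; rewrite /= eq_sym.
have from_terminals : \sum_j \sum_(i | half_ord j == i) elen (ebas R j - x i) =
    \sum_i (elen (ebas R (dbl_ord i) - x i) + elen (ebas R (dblS_ord i) - x i)).
  under eq_bigr do rewrite sum_half.
  by rewrite big_ord_double; apply: eq_bigr => i _; rewrite half_dbl_ord half_dblS_ord.
have from_splits :
    \sum_s (\sum_(r | @E _ T (inr s) (inr r))
               elen (splitv (@spos _ T s) - splitv (@spos _ T r))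
            + \sum_(i | s == att i) elen (splitv (@spos _ T s) - x i)) =
    steiner_len T / Num.sqrt 2 + \sum_i elen (splitv (@spos _ T (att i)) - x i).
  rewrite big_split /=; congr (_ + _).
    rewrite /steiner_len mulr_suml; apply: eq_bigr => s _.
    by rewrite mulr_suml; apply: eq_bigr => r _; exact: elen_splitvB.
  by rewrite (exchange_big_dep xpredT) //=; apply: eq_bigr => i _; exact: big_pred1_eq.
have from_fermat :
    \sum_i (\sum_(j | half_ord j == i) elen (x i - ebas R j)
            + \sum_(s | s == att i) elen (x i - splitv (@spos _ T s))) =
    \sum_i (elen (ebas R (dbl_ord i) - x i) + elen (ebas R (dblS_ord i) - x i)
            + elen (splitv (@spos _ T (att i)) - x i)).
  apply: eq_bigr => i _; rewrite big_pred1_eq elenBC; congr (_ + _).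
  rewrite big_mkcond big_ord_double (bigD1 i) //= big1 => [|k ki].
    by rewrite !half_dbl_ord !half_dblS_ord eqxx addr0 !(elenBC (x i)).
  by rewrite !half_dbl_ord !half_dblS_ord (negbTE ki) addr0.
rewrite from_terminals from_splits from_fermat !big_split /=.
by field.
Qed.

Lemma is_doubling_nT (T T' : stree R) : is_doubling T T' -> nT T' = (nT T).*2.
Proof. by case=> [att [x [_ _ ->]]]. Qed.

Lemma is_doubling_sym (T T' : stree R) :
  symmetric (@E _ T) -> is_doubling T T' -> symmetric (@E _ T').
Proof. by move=> Esym [att [x [_ _ ->]]] [j|[s|i]] [j'|[s'|i']] //=; rewrite Esym. Qed.

Lemma cost_is_doubling (T T' : stree R) :
  symmetric (@E _ T) -> is_doubling T T' ->
  cost T' = (cost T + (nT T)%:R * Num.sqrt 3) / Num.sqrt 2.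
Proof.
move=> Esym [att [x [leaf fermat ->]]].
rewrite cost_doubling (cost_leaf_att Esym leaf).
under eq_bigr => i _ do
  rewrite -[_ + elen _](mulKf (sqrt2_neq0 R)) (fermat_splitv_sum (fermat i)).
rewrite -mulr_sumr big_split /= sumr_const card_ord -mulr_natl.
by field.
Qed.

Lemma cost_doubling_seq d (T : nat -> stree R) :
  nT (T 0%N) = d -> symmetric (@E _ (T 0%N)) ->
  (forall k, is_doubling (T k) (T k.+1)) ->
  forall k, cost (T k.+1) = (cost (T k) + (2 ^ k * d)%:R * Num.sqrt 3) / Num.sqrt 2.
Proof.
move=> nT0 Esym0 dbl.
have inv k : symmetric (@E _ (T k)) /\ nT (T k) = (2 ^ k * d)%N.
  elim: k => [|k [Esym nTk]]; first by split; last by rewrite nT0 mul1n.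
  split; first exact: is_doubling_sym Esym (dbl k).
  by rewrite (is_doubling_nT (dbl k)) nTk expnS -mulnA mul2n.
by move=> k; have [Esym <-] := inv k; exact: cost_is_doubling.
Qed.

End Cost.

Local Open Scope classical_set_scope.

Lemma cvg_affine_rec_lim (R : realType) (u : R^nat) (a b l : R) : a != 1 ->
  u @ \oo --> l -> (forall n, u n.+1 = a * u n + b) -> l = b / (1 - a).
Proof.
move=> a_neq1 u_cvg u_rec.
have shift_l : (fun n => u n.+1) @ \oo --> l by rewrite cvg_shiftS.
have shift_fl : (fun n => u n.+1) @ \oo --> a * l + b.
  by rewrite (funext u_rec); apply: cvgD; [exact: cvgMl_tmp|exact: cvg_cst].
have fixpt : l = a * l + b := cvg_unique (@norm_hausdorff _ _) shift_l shift_fl.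
have Ba_neq0 : 1 - a != 0 by rewrite subr_eq0 eq_sym.
by apply: (mulIf Ba_neq0); rewrite divfK // mulrBr mulr1 {1}fixpt; ring.
Qed.

Lemma cvg_inv_exp2 (R : realType) : (fun k => ((2 ^ k)%:R : R)^-1) @ \oo --> 0.
Proof.
under eq_fun do rewrite natrX -exprVn.
by apply: cvg_expr; rewrite ger0_norm ?invr_ge0 // invf_lt1 // ltr1n.
Qed.

(* For [k = 0] and [d = 1] the MST cost vanishes and [ratio_seq] is junk. *)
Lemma ratio_seq_scaled (R : realType) d (T : nat -> stree R) k : (1 <= d)%N ->
  cost (T k.+1) / (2 ^ k.+1)%:R =
    ratio_seq d T k.+1 * ((d%:R - ((2 ^ k.+1)%:R)^-1) * Num.sqrt 2).
Proof.
move=> d_gt0; rewrite /ratio_seq natrM.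
have pow2_ge2 : (2 : R) <= (2 ^ k.+1)%:R by rewrite ler_nat expnS leq_pmulr // expn_gt0.
have d_ge1 : (1 : R) <= d%:R by rewrite ler1n.
field; rewrite sqrt2_neq0 /= ?andbT; apply/andP; split; rewrite gt_eqF //; nra.
Qed.

Theorem mainTheorem13 (R : realType) (d : nat) (T : nat -> stree R) :
  (1 <= d)%N ->
  nT (T 0%N) = d ->
  is_steiner_tree (T 0%N) ->
  (forall k, is_doubling (T k) (T k.+1)) ->
  cvgn (ratio_seq d T) ->
  limn (ratio_seq d T) = Num.sqrt 3 / (Num.sqrt 2 * (2 * Num.sqrt 2 - 1)).
Proof.
move=> d_gt0 nT0 [Esym0 _] dbl ratio_cvg; set L := limn _.
set s2 := Num.sqrt (2 : R); set s3 := Num.sqrt (3 : R).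
have s2_gt0 : 0 < s2 by rewrite sqrtr_gt0.
have s2_sqr : s2 ^+ 2 = 2 by rewrite sqr_sqrtr.
have s2_neq0 : s2 != 0 := sqrt2_neq0 R.
have s2D1_neq0 : 2 * s2 - 1 != 0 by rewrite gt_eqF //; nra.
pose c k := cost (T k.+1) / (2 ^ k.+1)%:R.
have c_cvg : c @ \oo --> L * ((d%:R - 0) * s2).
  rewrite /c (funext (fun k => ratio_seq_scaled T k d_gt0)).
  apply: cvgM; first by rewrite cvg_shiftS.
  apply: cvgMr_tmp; apply: cvgB; first exact: cvg_cst.
  by move: (@cvg_inv_exp2 R); rewrite -cvg_shiftS.
have c_rec k : c k.+1 = (2 * s2)^-1 * c k + d%:R * s3 / (2 * s2).
  rewrite /c (cost_doubling_seq nT0 Esym0 dbl) -/s2 -/s3 natrM !natrX !exprS.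
  by field; rewrite s2_neq0 expf_neq0.
have inv2s2_neq1 : (2 * s2)^-1 != 1 by rewrite invr_eq1 -subr_eq0.
have := cvg_affine_rec_lim inv2s2_neq1 c_cvg c_rec; rewrite subr0 => Lc.
have ds2_neq0 : d%:R * s2 != 0 by rewrite mulf_neq0 // pnatr_eq0 -lt0n.
by apply: (mulIf ds2_neq0); rewrite Lc; field; rewrite s2D1_neq0 s2_neq0.
Qed.
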